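(* Let $X$ be a finite dimensional real Banach space and let $f: X \to X$ be piecewise affine and nonexpansive with respect to the norm of $X$. Suppose $v, w \in X$ satisfy $f(v + tw) = v + (t+1)w$ for all $t \ge 0$. Let $g(x) = f(x) - w$ for $x \in X$. Then for every $x \in X$ there exists $m \in \mathbb{N}$ such that $$f^{k+m}(x) = g^k(f^m(x)) + k w$$ for all $k \in \mathbb{N}$.
   Context: $f$ is piecewise affine if $X$ is a finite union of closed convex sets on each of which $f$ agrees with an affine map. $f$ is nonexpansive with respect to the norm if $\|f(x) - f(y)\| \le \|x - y\|$ for all $x,y$. *)

From HB Require Import structures.
From mathcomp Require Import all_boot all_order all_algebra.
From mathcomp Require Import reals.
Set Implicit Arguments. Unset Strict Implicit. Unset Printing Implicit Defensive.
Import Order.TTheory GRing.Theory Num.Theory.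
Local Open Scope ring_scope.

(* A finite-dimensional real normed space is modelled as 'rV[R]_n equipped
   with an arbitrary norm N (every finite-dimensional real Banach space is
   linearly isometric to such a space). *)
Definition is_norm (R : realType) (n : nat) (N : 'rV[R]_n -> R) : Prop :=
  [/\ (forall x, N x = 0 -> x = 0),
      (forall (a : R) x, N (a *: x) = `|a| * N x) &
      (forall x y, N (x + y) <= N x + N y)].

Definition closed_wrt (R : realType) (n : nat) (N : 'rV[R]_n -> R)
    (C : 'rV[R]_n -> Prop) : Prop :=
  forall x, ~ C x -> exists2 e : R, 0 < e & forall y, N (y - x) < e -> ~ C y.

Definition convex_set (R : realType) (n : nat) (C : 'rV[R]_n -> Prop) : Prop :=
  forall x y (t : R), C x -> C y -> 0 <= t -> t <= 1 ->
    C (t *: x + (1 - t) *: y).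

Definition affine_on (R : realType) (n : nat) (f : 'rV[R]_n -> 'rV[R]_n)
    (C : 'rV[R]_n -> Prop) : Prop :=
  exists (A : 'M[R]_n) (b : 'rV[R]_n), forall x, C x -> f x = x *m A + b.

Definition piecewise_affine (R : realType) (n : nat) (N : 'rV[R]_n -> R)
    (f : 'rV[R]_n -> 'rV[R]_n) : Prop :=
  exists (k : nat) (C : 'I_k -> 'rV[R]_n -> Prop),
    (forall x, exists i, C i x) /\
    (forall i, [/\ closed_wrt N (C i), convex_set (C i) & affine_on f (C i)]).

Definition nonexpansive (R : realType) (n : nat) (N : 'rV[R]_n -> R)
    (f : 'rV[R]_n -> 'rV[R]_n) : Prop :=
  forall x y, N (f x - f y) <= N (x - y).

From HB Require Import structures.
From mathcomp Require Import all_boot all_order all_algebra.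
From mathcomp Require Import reals ring lra.
From Stdlib Require Import Classical.
Set Implicit Arguments. Unset Strict Implicit. Unset Printing Implicit Defensive.
Import Order.TTheory GRing.Theory Num.Theory.
Local Open Scope ring_scope.

(* The f-orbit of x stays within N (x - v) of the f-orbit v + j w of v, so
   f^j x = u_j + j w with u_j in a fixed ball around v.  Cover X by the
   closed convex pieces on which f is affine.  A piece either contains, with
   each of its points p, the whole ray p + R_+ w -- then f is affine with
   linear part A on that ray, nonexpansiveness against the ray v + R_+ w
   bounds N (c + lam (w A - w)) uniformly in lam, so w A = w and f commutes
   with translation by lam w there -- or some ray leaves it, and then by
   closedness and convexity it misses all points u + t w with u in the ball
   and t large.  Past a common threshold m every f^j x with j >= m thus lies
   in a piece of the first kind, which gives f^(k + m) x = g^k (f^m x) + k w. *)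

Section NormFacts.
Variables (R : realType) (n : nat) (N : 'rV[R]_n -> R).
Hypothesis hN : is_norm N.

Lemma norm_eq0 x : N x = 0 -> x = 0.
Proof. by case: hN => h _ _; apply: h. Qed.

Lemma normZ (a : R) x : N (a *: x) = `|a| * N x.
Proof. by case: hN => _ h _; apply: h. Qed.

Lemma normD_le x y : N (x + y) <= N x + N y.
Proof. by case: hN => _ _ h; apply: h. Qed.

Lemma norm0 : N 0 = 0.
Proof. by rewrite -(scale0r (0 : 'rV[R]_n)) normZ normr0 mul0r. Qed.

Lemma normN x : N (- x) = N x.
Proof. by rewrite -scaleN1r normZ normrN normr1 mul1r. Qed.

Lemma norm_ge0 x : 0 <= N x.
Proof.
have := normD_le x (- x); rewrite subrr norm0 normN => h.
by rewrite -(pmulrn_lge0 _ (ltn0Sn 1)) mulr2n.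
Qed.

Lemma normB_le x y z : N (x - z) <= N (x - y) + N (y - z).
Proof. by have := normD_le (x - y) (y - z); rewrite addrA subrK. Qed.

Lemma ray_bounded_dir0 (c d : 'rV[R]_n) (K : R) :
  (forall lam, 0 <= lam -> N (c + lam *: d) <= K) -> d = 0.
Proof.
move=> bounded; apply: norm_eq0; apply/eqP.
rewrite eq_le norm_ge0 andbT leNgt; apply/negP => Nd_gt0.
pose lam := (K + N c + 1) / N d.
have lam_ge0 : 0 <= lam.
  rewrite divr_ge0 ?norm_ge0 //.
  by have := le_trans (norm_ge0 _) (bounded 0 (lexx _)); have := norm_ge0 c; lra.
have N_lamd : N (lam *: d) = K + N c + 1.
  by rewrite normZ ger0_norm // divfK // gt_eqF.
have := normD_le (c + lam *: d) (- c); rewrite addrC addKr normN N_lamd.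
by have := bounded lam lam_ge0; lra.
Qed.

End NormFacts.

Definition translates_along (R : realType) (n : nat)
    (f : 'rV[R]_n -> 'rV[R]_n) (w p : 'rV[R]_n) : Prop :=
  forall lam, 0 <= lam -> f (p + lam *: w) = f p + lam *: w.

Section Pieces.
Variables (R : realType) (n : nat) (N : 'rV[R]_n -> R).
Hypothesis hN : is_norm N.
Variables (f : 'rV[R]_n -> 'rV[R]_n) (v w : 'rV[R]_n).
Hypothesis f_ne : nonexpansive N f.
Hypothesis f_ray : forall t : R, 0 <= t -> f (v + t *: w) = v + (t + 1) *: w.

Lemma affine_ray_fixes_dir (C : 'rV[R]_n -> Prop) A b p :
  (forall x, C x -> f x = x *m A + b) ->
  (forall lam, 0 <= lam -> C (p + lam *: w)) -> w *m A = w.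
Proof.
move=> fA Cray; apply/eqP; rewrite -subr_eq0; apply/eqP.
apply: (@ray_bounded_dir0 _ _ N hN (p *m A + b - v - w) _ (N (p - v))).
move=> lam lam_ge0; have := f_ne (p + lam *: w) (v + lam *: w).
rewrite (fA _ (Cray _ lam_ge0)) f_ray // mulmxDl -scalemxAl.
have -> : p + lam *: w - (v + lam *: w) = p - v.
  by apply/rowP => j; rewrite !mxE; ring.
congr (N _ <= _); move: (p *m A) (w *m A) => pA wA.
by apply/rowP => j; rewrite !mxE; ring.
Qed.

Lemma affine_ray_translates (C : 'rV[R]_n -> Prop) A b p :
  (forall x, C x -> f x = x *m A + b) ->
  (forall lam, 0 <= lam -> C (p + lam *: w)) -> translates_along f w p.
Proof.
move=> fA Cray lam lam_ge0.
have Cp : C p by have := Cray 0 (lexx _); rewrite scale0r addr0.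
rewrite (fA _ (Cray _ lam_ge0)) (fA _ Cp) mulmxDl -scalemxAl (affine_ray_fixes_dir fA Cray).
by move: (p *m A) => pA; apply/rowP => j; rewrite !mxE; ring.
Qed.

End Pieces.

Lemma closed_convex_escape (R : realType) (n : nat) (N : 'rV[R]_n -> R)
    (C : 'rV[R]_n -> Prop) (v w p : 'rV[R]_n) (r lam : R) :
  is_norm N -> closed_wrt N C -> convex_set C ->
  C p -> 0 <= lam -> ~ C (p + lam *: w) ->
  exists T : R, forall u t, N (u - v) <= r -> T < t -> ~ C (u + t *: w).
Proof.
move=> hN C_closed C_convex Cp lam_ge0 nC.
have [e e_gt0 He] := C_closed _ nC.
pose K := `|r + N (v - p)|.
exists (lam * (K / e + 1)) => u t u_near T_lt_t Ct.
have Ke_ge0 : 0 <= K / e by rewrite divr_ge0 ?normr_ge0 ?ltW.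
have lam_le_t : lam <= t.
  by apply: le_trans (ltW T_lt_t); rewrite mulrDr mulr1 lerDr mulr_ge0.
have t_gt0 : 0 < t.
  by apply: le_lt_trans T_lt_t; rewrite mulr_ge0 // addr_ge0.
pose s := lam / t.
have s_ge0 : 0 <= s by rewrite divr_ge0 // ltW.
have s_le1 : s <= 1 by rewrite ler_pdivrMr // mul1r.
(* the point of [p, u + t w] at parameter s lies within e of p + lam w *)
apply: (He _ _ (C_convex _ _ s Ct Cp s_ge0 s_le1)).
have -> : s *: (u + t *: w) + (1 - s) *: p - (p + lam *: w) = s *: (u - p).
  by apply/rowP => j; rewrite !mxE /s; field; rewrite gt_eqF.
rewrite normZ // ger0_norm //.
have Nup_le : N (u - p) <= K.
  apply: le_trans (normB_le hN u v p) _; apply: le_trans (ler_norm _); lra.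
apply: le_lt_trans (ler_wpM2l s_ge0 Nup_le) _.
rewrite /s mulrAC ltr_pdivrMr //.
have : e * (lam * (K / e + 1)) < e * t by rewrite ltr_pM2l.
have -> : e * (lam * (K / e + 1)) = lam * K + lam * e.
  by field; rewrite gt_eqF.
have : 0 <= lam * e by rewrite mulr_ge0 // ltW.
lra.
Qed.

Section Threshold.
Variables (R : realType) (n : nat) (N : 'rV[R]_n -> R).
Hypothesis hN : is_norm N.
Variables (f : 'rV[R]_n -> 'rV[R]_n) (v w : 'rV[R]_n).
Hypothesis f_ne : nonexpansive N f.
Hypothesis f_ray : forall t : R, 0 <= t -> f (v + t *: w) = v + (t + 1) *: w.
Variable r : R.

Lemma piece_eventually_translates (C : 'rV[R]_n -> Prop) :
  closed_wrt N C -> convex_set C -> affine_on f C ->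
  exists M : nat, forall u t, N (u - v) <= r -> M%:R <= t ->
    C (u + t *: w) -> translates_along f w (u + t *: w).
Proof.
move=> C_closed C_convex [A [b fA]].
have [[p [lam [Cp [lam_ge0 nC]]]]|stable] :=
  classic (exists p lam, C p /\ 0 <= lam /\ ~ C (p + lam *: w)).
- have [T HT] := closed_convex_escape v r hN C_closed C_convex Cp lam_ge0 nC.
  exists (Num.Def.archi_bound `|T|) => u t u_near M_le_t Ct; exfalso.
  apply: (HT u t u_near _ Ct); apply: le_lt_trans (ler_norm T) _.
  exact: lt_le_trans (archi_boundP (normr_ge0 T)) M_le_t.
- exists 0%N => u t _ _ Ct.
  apply: (affine_ray_translates hN f_ne f_ray fA) => lam lam_ge0.
  by apply: NNPP => nC; apply: stable; exists (u + t *: w), lam.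
Qed.

Lemma eventually_translates : piecewise_affine N f ->
  exists M : nat, forall u t, N (u - v) <= r -> M%:R <= t ->
    translates_along f w (u + t *: w).
Proof.
move=> [k [C [C_cover C_pieces]]].
have piece i : exists Mi : nat, forall u t, N (u - v) <= r -> Mi%:R <= t ->
    C i (u + t *: w) -> translates_along f w (u + t *: w).
  by have [? ? ?] := C_pieces i; apply: piece_eventually_translates.
have [M HM] := fin_all_exists piece.
exists (\max_i M i)%N => u t u_near M_le_t; have [i Ci] := C_cover (u + t *: w).
apply: (HM i u t u_near _ Ci); apply: le_trans M_le_t.
by rewrite ler_nat (leq_bigmax i).
Qed.

End Threshold.

Lemma iter_nonexpansive (R : realType) (n : nat) (N : 'rV[R]_n -> R)
    (f : 'rV[R]_n -> 'rV[R]_n) j x y :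
  nonexpansive N f -> N (iter j f x - iter j f y) <= N (x - y).
Proof. by move=> f_ne; elim: j => //= j IH; apply: le_trans (f_ne _ _) IH. Qed.

Theorem mainTheorem9 (R : realType) (n : nat) (N : 'rV[R]_n -> R)
    (f : 'rV[R]_n -> 'rV[R]_n) (v w : 'rV[R]_n) :
  is_norm N -> piecewise_affine N f -> nonexpansive N f ->
  (forall t : R, 0 <= t -> f (v + t *: w) = v + (t + 1) *: w) ->
  let g := fun x => f x - w in
  forall x : 'rV[R]_n, exists m : nat, forall k : nat,
    iter (k + m) f x = iter k g (iter m f x) + k%:R *: w.
Proof.
move=> hN f_pa f_ne f_ray g x.
have orbit_v j : iter j f v = v + j%:R *: w.
  elim: j => [|j IH] /=; first by rewrite scale0r addr0.
  by rewrite IH f_ray // -[j.+1]addn1 natrD.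
have [m Hm] := eventually_translates hN f_ne f_ray (N (x - v)) f_pa.
exists m; elim=> [|k IH]; first by rewrite scale0r addr0.
rewrite addSn /=; set z := iter (k + m) f x in IH *.
have -> : iter k g (iter m f x) = z - k%:R *: w by rewrite IH addrK.
pose u := z - (k + m)%:R *: w.
have u_near : N (u - v) <= N (x - v).
  have -> : u - v = z - iter (k + m) f v.
    by rewrite orbit_v /u; apply/rowP => j; rewrite !mxE; ring.
  exact: iter_nonexpansive.
have z_split : z = u + m%:R *: w + k%:R *: w.
  by rewrite /u natrD; apply/rowP => j; rewrite !mxE; ring.
have shifted : z - k%:R *: w = u + m%:R *: w by rewrite z_split addrK.
rewrite /g shifted {1}z_split (Hm u m%:R u_near (lexx _) k%:R (ler0n _ _)).
rewrite -[k.+1]addn1 natrD; apply/rowP => j; rewrite !mxE; ring.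
Qed.
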